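(* Let $G$ be a maximal outerplanar graph with at least three vertices. Then $\mathrm{fall}(G)=\{3\}$.
   Context: For a graph $G=(V,E)$ and a partition $\Pi=\{V_1,\dots,V_k\}$ of $V$, a vertex $v\in V_i$ is colorful if $v$ is adjacent to at least one vertex of each class $V_j$ with $j\neq i$. $\Pi$ is a fall $k$-coloring if every $V_i$ is an independent set and every vertex is colorful; equivalently, $V$ is partitioned into $k$ independent dominating sets. The fall set $\mathrm{fall}(G)$ is the set of all integers $k$ such that $G$ admits a fall $k$-coloring. *)

From mathcomp Require Import all_boot.
Set Implicit Arguments. Unset Strict Implicit. Unset Printing Implicit Defensive.

(* A finite simple graph: vertex type T : finType, adjacency e : rel T,
   assumed symmetric and irreflexive (hypotheses of the theorem). *)

(* Outerplanar (combinatorial convex-drawing form): the vertices can be placed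
   in a cyclic order on a circle (positions p, injective) so that no two edges,
   drawn as straight chords, cross, i.e. no edges ab, cd with
   p a < p c < p b < p d. *)
Definition outerplanar (T : finType) (e : rel T) : Prop :=
  exists p : T -> nat, injective p /\
    forall a b c d, e a b -> e c d -> ~~ ((p a < p c) && (p c < p b) && (p b < p d)).

Definition add_edge (T : finType) (e : rel T) (x y : T) : rel T :=
  fun u v => [|| e u v, (u == x) && (v == y) | (u == y) && (v == x)].

Definition maximal_outerplanar (T : finType) (e : rel T) : Prop :=
  outerplanar e /\
  forall x y : T, x != y -> ~~ e x y -> ~ outerplanar (add_edge e x y).

Definition fall_coloring (T : finType) (e : rel T) (k : nat) : Prop :=
  exists c : T -> 'I_k,
    (forall i : 'I_k, exists v, c v = i) /\
    (forall u v, e u v -> c u != c v) /\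
    (forall (v : T) (i : 'I_k), i != c v -> exists u, e v u && (c u == i)).

Definition fall_set (T : finType) (e : rel T) : nat -> Prop :=
  fun k => fall_coloring e k.

(* Number the vertices along the convex drawing p.  Maximality makes the two
   extreme vertices adjacent, and puts on every chord ij with vertices strictly
   between its ends a triangle ikj with p i < p k < p j; splitting along these
   triangles shows that the graph is properly 3-colourable, that every vertex
   lies on a triangle, and that some vertex (an ear) has at most two
   neighbours.  A triangle needs three colour classes, the ear sees at most two
   of the k - 1 classes it must see, and a proper 3-colouring is a fall
   colouring because every vertex sees the other two colours on its triangle. *)

From mathcomp Require Import all_boot zify.

Set Implicit Arguments.
Unset Strict Implicit.
Unset Printing Implicit Defensive.

Lemma ord3_cover (a b c x : 'I_3) :
  a != b -> b != c -> a != c -> [|| x == a, x == b | x == c].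
Proof.
rewrite -!val_eqE /=.
by have := ltn_ord a; have := ltn_ord b; have := ltn_ord c; have := ltn_ord x; lia.
Qed.

Lemma ord3_third (a b : 'I_3) : a != b -> exists c : 'I_3, c != a /\ c != b.
Proof.
rewrite -val_eqE /= => ab; exists (inord (3 - a - b)).
by rewrite -!val_eqE /= inordK; have := ltn_ord a; have := ltn_ord b; lia.
Qed.

Section FallColoring.
Variables (T : finType) (e : rel T).

Lemma fall_coloring_ge3_triangle k a b c :
  e a b -> e b c -> e a c -> fall_coloring e k -> 3 <= k.
Proof.
move=> ab bc ac [col [_ [proper _]]].
move: (proper _ _ ab) (proper _ _ bc) (proper _ _ ac); rewrite -!val_eqE /=.
by have := ltn_ord (col a); have := ltn_ord (col b); have := ltn_ord (col c); lia.
Qed.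

Lemma fall_coloring_le3_deg2 k m u w :
  (forall x, e m x -> x = u \/ x = w) -> fall_coloring e k -> k <= 3.
Proof.
move=> Nm [col [_ [_ colorful]]].
suff : #|~: [set col m]| <= 2 by rewrite cardsC1 card_ord; lia.
have le2 : #|[set col u; col w]| <= 2 by rewrite cards2; case: (_ != _).
apply: leq_trans le2; apply/subset_leq_card/subsetP => i.
rewrite !inE => /colorful[v /andP[mv /eqP <-]].
by case: (Nm v mv) => ->; rewrite eqxx ?orbT.
Qed.

Lemma fall_coloring3_of_triangles (c : T -> 'I_3) (v0 : T) :
  (forall a b, e a b -> c a != c b) ->
  (forall v, exists a b, [/\ e v a, e v b & e a b]) -> fall_coloring e 3.
Proof.
move=> proper triangle; exists c; split; [|split=> //].
- move=> i; have [a [b [v0a v0b ab]]] := triangle v0.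
  have := ord3_cover i (proper _ _ v0a) (proper _ _ ab) (proper _ _ v0b).
  case/or3P=> /eqP ->.
  + by exists v0.
  + by exists a.
  + by exists b.
- move=> v i iv; have [a [b [va vb ab]]] := triangle v.
  have := ord3_cover i (proper _ _ va) (proper _ _ ab) (proper _ _ vb).
  case/or3P=> /eqP ci.
  + by rewrite ci eqxx in iv.
  + by exists a; rewrite va ci eqxx.
  + by exists b; rewrite vb ci eqxx.
Qed.

End FallColoring.

Section ConvexDrawing.
Variables (T : finType) (e : rel T) (p : T -> nat).
Hypotheses (e_sym : symmetric e) (e_irr : irreflexive e) (p_inj : injective p).
Hypothesis no_crossing :
  forall a b c d, e a b -> e c d -> ~~ ((p a < p c) && (p c < p b) && (p b < p d)).
Hypothesis maximal :
  forall x y : T, x != y -> ~~ e x y -> ~ outerplanar (add_edge e x y).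

Lemma crossing a b c d :
  e a b -> e c d -> p a < p c -> p c < p b -> p b < p d -> False.
Proof. by move=> ab cd ac cb bd; move: (no_crossing ab cd); rewrite ac cb bd. Qed.

Lemma interval_cases i j x : p i <= p x <= p j ->
  [\/ x = i, x = j | p i < p x < p j].
Proof.
case/andP=> ix xj.
case: (ltngtP (p i) (p x)) => [ix'|xi|/p_inj ->]; [|lia|by constructor 1].
case: (ltngtP (p x) (p j)) => [xj'|jx|/p_inj ->]; [|lia|by constructor 2].
by constructor 3.
Qed.

(* Maximality: a chord xy that no edge separates could be added. *)
Lemma edge_of_unseparated x y : p x < p y ->
  (forall a b, e a b -> p x < p a < p y -> p x <= p b <= p y) -> e x y.
Proof.
move=> xy unsep; apply/negPn/negP => nxy.
have xny : x != y by apply/eqP => exy; move: xy; rewrite exy ltnn.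
suff : outerplanar (add_edge e x y) by exact: maximal xny nxy.
exists p; split=> // a b c d.
rewrite /add_edge => /or3P [ab|/andP[/eqP-> /eqP->]|/andP[/eqP-> /eqP->]]
  /or3P [cd|/andP[/eqP-> /eqP->]|/andP[/eqP-> /eqP->]];
  apply/negP => /andP[/andP[h1 h2] h3]; try lia.
- exact: crossing ab cd h1 h2 h3.
- by move: (unsep b a); rewrite e_sym ab h2 h3 => /(_ isT isT); lia.
- by move: (unsep c d cd); rewrite h1 h2 => /(_ isT); lia.
Qed.

(* i sees the first vertex strictly between i and j; the last neighbour k of i
   before j is then adjacent to j. *)
Lemma apex i j : e i j -> (exists z, p i < p z < p j) ->
  exists k, [/\ p i < p k < p j, e i k & e k j].
Proof.
move=> ij [z iz].
case: (@arg_minnP _ z (fun x => p i < p x < p j) p iz) => m im m_min.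
have e_im : e i m.
  apply: edge_of_unseparated => [|a b _ /andP[ia am]]; first by case/andP: im.
  have : p i < p a < p j by case/andP: im => _ mj; rewrite ia /=; lia.
  by move/m_min; lia.
have im' : (p i < p m < p j) && e i m by rewrite im e_im.
case: (@arg_maxnP _ m (fun x => (p i < p x < p j) && e i x) p im')
  => k /andP[ik e_ik] k_max.
exists k; split=> //; apply: edge_of_unseparated => [|a b ab /andP[ka aj]].
  by case/andP: ik.
case: (ltnP (p j) (p b)) => [jb|bj]; first by exfalso; apply: (crossing ij ab); lia.
case: (ltnP (p b) (p k)) => [bk|]; last lia.
exfalso; case: (ltngtP (p b) (p i)) => [bi|ib|/p_inj bi].
- have ba : e b a by rewrite e_sym.
  by apply: (crossing ba ij) => //; case/andP: ik; lia.
- have ba : e b a by rewrite e_sym.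
  exact: (crossing e_ik ba).
- have : (p i < p a < p j) && e i a by rewrite -bi e_sym ab andbT; apply/andP; lia.
  by move/k_max; lia.
Qed.

Definition strictly_between i j := [set x | p i < p x < p j].

Lemma card_strictly_between_apex i j k : p i < p k < p j ->
  #|strictly_between i k| < #|strictly_between i j| /\
  #|strictly_between k j| < #|strictly_between i j|.
Proof.
case/andP=> ik kj; split; apply: proper_card; apply/properP; split;
  try (by exists k; rewrite !inE ?ltnn ?andbF ?ik ?kj);
  by apply/subsetP => x; rewrite !inE; lia.
Qed.

Lemma chord_ind (P : T -> T -> Prop) :
  (forall i j, e i j -> p i < p j -> (forall z, ~~ (p i < p z < p j)) -> P i j) ->
  (forall i j k, e i j -> e i k -> e k j -> p i < p k < p j ->
     P i k -> P k j -> P i j) ->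
  forall i j, e i j -> p i < p j -> P i j.
Proof.
move=> Pbase Pstep.
suff Pn n i j : #|strictly_between i j| = n -> e i j -> p i < p j -> P i j.
  by move=> i j; apply: Pn.
elim/ltn_ind: n i j => n IH i j Sn ij lt_ij.
case: (pickP [pred z | p i < p z < p j]) => [z iz|none];
  last by apply: Pbase => // z; apply/negbT/none.
have [k [ikj ik kj]] := apex ij (ex_intro _ z iz).
have [ltl ltr] := card_strictly_between_apex ikj; rewrite Sn in ltl ltr.
have /andP[lt_ik lt_kj] := ikj.
apply: (Pstep i j k) => //.
  exact: IH _ ltl i k erefl ik lt_ik.
exact: IH _ ltr k j erefl kj lt_kj.
Qed.

Lemma chord_ear i j : e i j -> p i < p j -> (exists z, p i < p z < p j) ->
  exists m u w, forall x, e m x -> x = u \/ x = w.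
Proof.
move: i j; apply: chord_ind => [i j _ _ none [z iz]|i j k ij ik kj ikj earl earr _].
  by move: (none z); rewrite iz.
case: (pickP [pred y | p i < p y < p k]) => [y iyk|nonel]; first by apply: earl; exists y.
case: (pickP [pred y | p k < p y < p j]) => [y kyj|noner]; first by apply: earr; exists y.
have /andP[lt_ik lt_kj] := ikj.
exists k, i, j => x kx.
have ix : p i <= p x.
  rewrite leqNgt; apply/negP => xi.
  have xk : e x k by rewrite e_sym.
  exact: (crossing xk ij).
have xj : p x <= p j.
  by rewrite leqNgt; apply/negP => jx; apply: (crossing ij kx).
have ixj : p i <= p x <= p j by rewrite ix xj.
have [->|->|/andP[ix' xj']] := interval_cases ixj; [by left|by right|].
case: (ltngtP (p x) (p k)) => [xk|kx'|/p_inj xk].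
- by move: (nonel x); rewrite /= ix' xk.
- by move: (noner x); rewrite /= xj' kx'.
- by rewrite xk e_irr in kx.
Qed.

Lemma chord_triangle i j : e i j -> p i < p j ->
  forall v, p i < p v < p j -> exists a b, [/\ e v a, e v b & e a b].
Proof.
move: i j; apply: chord_ind => [i j _ _ none v iv|i j k ij ik kj ikj Tl Tr v ivj].
  by move: (none v); rewrite iv.
have /andP[iv vj] := ivj.
case: (ltngtP (p v) (p k)) => [vk|kv|/p_inj ->].
- by apply: Tl; rewrite iv vk.
- by apply: Tr; rewrite kv vj.
- by exists i, j; rewrite e_sym ik kj ij.
Qed.

Definition proper_between i j (c : T -> 'I_3) :=
  forall a b, p i <= p a <= p j -> p i <= p b <= p j -> e a b -> c a != c b.

Lemma edge_across_apex i j k a b : e i k -> e k j -> p i < p k < p j ->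
  p i <= p a < p k -> p k < p b <= p j -> e a b -> a = i /\ b = j.
Proof.
move=> ik kj /andP[lt_ik lt_kj] /andP[ia ak] /andP[kb bj] ab.
case: (ltngtP (p i) (p a)) => [lt_ia|ai|/p_inj ai]; [|lia|].
  by exfalso; apply: (crossing ik ab).
subst a; split=> //; case: (ltngtP (p b) (p j)) => [lt_bj|jb|/p_inj //]; [|lia].
by exfalso; apply: (crossing ab kj).
Qed.

Lemma proper_between_glue i j k (c1 c2 : T -> 'I_3) :
  e i k -> e k j -> p i < p k < p j -> c1 k = c2 k -> c1 i != c2 j ->
  proper_between i k c1 -> proper_between k j c2 ->
  proper_between i j (fun x => if p x <= p k then c1 x else c2 x).
Proof.
move=> ik kj ikj c12k c1i_c2j P1 P2.
have /andP[lt_ik lt_kj] := ikj.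
have right x : p k <= p x -> (if p x <= p k then c1 x else c2 x) = c2 x.
  by move=> kx; case: ifP => // xk; have /p_inj -> : p x = p k by lia.
move=> a b.
wlog ab_le : a b / p a <= p b.
  move=> wlog ha hb ab; case: (leqP (p a) (p b)) => [le_ab|/ltnW le_ba].
    exact: wlog.
  by rewrite eq_sym; apply: wlog => //; rewrite e_sym.
move=> /andP[ia aj] /andP[ib bj] ab.
case: (leqP (p b) (p k)) => [bk|kb].
  have ak := leq_trans ab_le bk.
  by rewrite ak; apply: P1 ab; rewrite ?ia ?ib ?ak ?bk.
case: (leqP (p k) (p a)) => [ka|ak].
  by rewrite right //; apply: P2 ab; rewrite ?ka ?aj ?bj ?(ltnW kb).
have [-> ->] : a = i /\ b = j.
  by apply: (edge_across_apex ik kj ikj _ _ ab); rewrite ?ia ?ak ?kb ?bj.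
by rewrite (ltnW lt_ik).
Qed.

Lemma chord_color3 i j : e i j -> p i < p j ->
  forall ci cj : 'I_3, ci != cj ->
  exists c, [/\ c i = ci, c j = cj & proper_between i j c].
Proof.
move: i j; apply: chord_ind => [i j ij lt_ij none|i j k ij ik kj ikj Cl Cr] ci cj cij.
  have ji : j != i by apply/eqP => ji; move: lt_ij; rewrite ji ltnn.
  exists (fun x => if x == i then ci else cj); split; rewrite ?eqxx ?(negbTE ji) //.
  have ends x : p i <= p x <= p j -> x = i \/ x = j.
    by case/interval_cases=> [|| ixj]; [left|right|move: (none x); rewrite ixj].
  move=> a b /ends[]-> /ends[]->; rewrite ?e_irr // => _;
    by rewrite eqxx (negbTE ji) // eq_sym.
have [ck [cki ckj]] := ord3_third cij.
have ick : ci != ck by rewrite eq_sym.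
have [c1 [c1i c1k P1]] := Cl ci ck ick.
have [c2 [c2k c2j P2]] := Cr ck cj ckj.
have /andP[lt_ik lt_kj] := ikj.
exists (fun x => if p x <= p k then c1 x else c2 x); split.
- by rewrite (ltnW lt_ik).
- by rewrite leqNgt lt_kj.
- by apply: proper_between_glue; rewrite ?c1i ?c2j ?c1k ?c2k.
Qed.

Section WholeGraph.
Hypothesis card_ge3 : 3 <= #|T|.

Lemma outer_chord : exists x0 x1, [/\ e x0 x1, p x0 < p x1,
  forall x, p x0 <= p x <= p x1 & exists z, p x0 < p z < p x1].
Proof.
have /card_gt0P [z0 _] : 0 < #|T| by lia.
case: (@arg_minnP _ z0 xpredT p isT) => x0 _ x0_min.
case: (@arg_maxnP _ z0 xpredT p isT) => x1 _ x1_max.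
have range x : p x0 <= p x <= p x1 by rewrite x0_min //; exact: x1_max.
have /card_gt0P [z] : 0 < #|~: [set x0; x1]|.
  by move: card_ge3; rewrite -(cardsC [set x0; x1]) cards2; case: (x0 != x1) => /=; lia.
rewrite !inE negb_or => /andP[zx0 zx1].
have inside : p x0 < p z < p x1.
  case: (interval_cases (range z)) => [/eqP|/eqP|//].
    by rewrite (negbTE zx0).
  by rewrite (negbTE zx1).
have lt01 : p x0 < p x1 by case/andP: inside; lia.
exists x0, x1; split=> //; last by exists z.
by apply: edge_of_unseparated => // a b _ _; apply: range.
Qed.

Lemma exists_ear : exists m u w, forall x, e m x -> x = u \/ x = w.
Proof.
have [x0 [x1 [x01 lt01 _ inside]]] := outer_chord.
exact: chord_ear x01 lt01 inside.
Qed.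

Lemma in_triangle v : exists a b, [/\ e v a, e v b & e a b].
Proof.
have [x0 [x1 [x01 lt01 range inside]]] := outer_chord.
have [t [_ x0t tx1]] := apex x01 inside.
case: (interval_cases (range v)) => [->|->|].
- by exists x1, t; rewrite x01 x0t (e_sym x1).
- by exists x0, t; rewrite !(e_sym x1) x01 tx1 x0t.
- exact: chord_triangle.
Qed.

Lemma exists_proper_3coloring :
  exists c : T -> 'I_3, forall a b, e a b -> c a != c b.
Proof.
have [x0 [x1 [x01 lt01 range _]]] := outer_chord.
have [c [_ _ proper]] := chord_color3 x01 lt01 (isT : ord0 != ord_max :> 'I_3).
by exists c => a b; apply: proper; apply: range.
Qed.

End WholeGraph.

End ConvexDrawing.

Theorem theorem3 (T : finType) (e : rel T) :
  symmetric e -> irreflexive e -> 3 <= #|T| -> maximal_outerplanar e ->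
  forall k : nat, fall_set e k <-> k = 3.
Proof.
move=> e_sym e_irr card_ge3 [[p [p_inj no_crossing]] maximal] k.
have [m [u [w ear]]] := exists_ear e_sym e_irr p_inj no_crossing maximal card_ge3.
have triangle := in_triangle e_sym p_inj no_crossing maximal card_ge3.
have [c proper] := exists_proper_3coloring e_sym e_irr p_inj no_crossing maximal card_ge3.
have /card_gt0P [v0 _] : 0 < #|T| by lia.
split=> [fall_k | ->]; last exact: fall_coloring3_of_triangles v0 proper triangle.
have [a [b [v0a v0b ab]]] := triangle v0.
apply/eqP; rewrite eqn_leq (fall_coloring_le3_deg2 ear fall_k).
exact: fall_coloring_ge3_triangle v0a ab v0b fall_k.
Qed.
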